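(* Let $p$ be a prime and $m\ge 3$, and let $\mathcal{G}$ be the set of all groups isomorphic to either $D_1=\mathbb{Z}_p^m$ or $D_2=\mathbb{Z}_p^{m-2}\times\mathbb{Z}_{p^2}$. Any deterministic algorithm that determines whether a given $G\in\mathcal{G}$ is isomorphic to $D_1$ or to $D_2$ must access the elements of $G$ and its Cayley table at least $\Omega(p^{m-2})=\Omega(|G|/p^2)$ times.
   Context: The element sets of the groups in $\mathcal{G}$ are subsets of a fixed countable set. The algorithm accesses elements of $G$ one at a time and queries the Cayley table on elements it has obtained; each such access counts as one access. *)

From HB Require Import structures.
From mathcomp Require Import all_boot all_order all_algebra.
Set Implicit Arguments. Unset Strict Implicit. Unset Printing Implicit Defensive.
Import GRing.Theory.
Local Open Scope ring_scope.

Definition D1 (p m : nat) : zmodType := 'rV['Z_p]_m.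
Definition D2 (p m : nat) : zmodType := ('rV['Z_p]_(m - 2) * 'Z_(p ^ 2))%type.

(* A group presented by a Cayley table: its elements are natural numbers
   (the fixed countable ambient set), listed in the order [carrier], and
   [cmul] is its multiplication table. *)
Record cayley_input := CayleyInput {
  carrier : seq nat;
  cmul : nat -> nat -> nat }.

Definition iso_to (V : zmodType) (G : cayley_input) : Prop :=
  uniq (carrier G) /\
  {in carrier G &, forall x y, cmul G x y \in carrier G} /\
  exists phi : nat -> V,
    {in carrier G &, injective phi} /\
    (forall v : V, exists2 x, x \in carrier G & phi x = v) /\
    {in carrier G &, forall x y, phi (cmul G x y) = phi x + phi y}.

Definition in_calG (p m : nat) (G : cayley_input) : Prop :=
  iso_to (D1 p m) G \/ iso_to (D2 p m) G.

(* Deterministic (adaptive) query algorithms, as decision trees.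
   - [QElem k c]  : access the k-th element of G (index taken mod |G|);
   - [QMul x y c] : query the Cayley table at (x, y); answered only if
                    x and y are elements already obtained, otherwise the
                    answer is the dummy 0 and nothing is learned;
   - [Output b]   : stop and answer b (true = "G is isomorphic to D1"). *)
Inductive algo :=
| Output of bool
| QElem of nat & (nat -> algo)
| QMul of nat & nat & (nat -> algo).

Fixpoint run (a : algo) (G : cayley_input) (hist : seq nat) : bool * nat :=
  match a with
  | Output b => (b, 0%N)
  | QElem k c =>
      let x := nth 0%N (carrier G) (k %% size (carrier G)) in
      let r := run (c x) G (x :: hist) in (r.1, r.2.+1)
  | QMul x y c =>
      if (x \in hist) && (y \in hist) then
        let z := cmul G x y in
        let r := run (c z) G (z :: hist) in (r.1, r.2.+1)
      else
        let r := run (c 0%N) G hist in (r.1, r.2.+1)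
  end.

Definition answer (a : algo) (G : cayley_input) : bool := (run a G [::]).1.
Definition cost (a : algo) (G : cayley_input) : nat := (run a G [::]).2.

From mathcomp Require Import all_boot all_order all_algebra all_fingroup zify.
Set Implicit Arguments. Unset Strict Implicit. Unset Printing Implicit Defensive.
Import GRing.Theory.

(* D1 and D2 share a subgroup S of index p: the vectors of D1 with one fixed
   coordinate zero, and Z_p^(m-2) x pZ_(p^2) in D2.  Encode both groups by the
   same finite set of codes, so that their Cayley tables agree on S x S, and
   list the codes in an order chosen by an adversary: every element access is
   answered by a fresh element of S, which is possible while fewer than |S|
   elements have been revealed.  Then an algorithm making fewer than
   |S| >= p^(m-2) accesses runs identically on both tables, although the groups
   are not isomorphic (D1 has exponent p, D2 has not). *)

Definition cayley_expS (G : cayley_input) (x n : nat) : nat :=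
  iter n (fun y => cmul G y x) x.

Lemma iso_to_exponentP (V : zmodType) (G : cayley_input) (p : nat) :
  iso_to V G ->
  (forall v : V, (v *+ p = 0)%R) <-> {in carrier G, forall x, cayley_expS G x p = x}.
Proof.
case=> _ [mulG [phi [phi_inj [phi_onto phiM]]]].
have expS_spec x n : x \in carrier G ->
    cayley_expS G x n \in carrier G /\ phi (cayley_expS G x n) = (phi x *+ n.+1)%R.
  move=> xG; elim: n => [|n [IHG IHphi]] //=.
  by rewrite mulG // phiM // IHphi -mulrSr.
split=> [Vp x xG | Gp v].
- have [expG expE] := expS_spec x p xG.
  by apply: phi_inj => //; rewrite expE mulrSr Vp add0r.
- have [x xG <-] := phi_onto v; have [_ expE] := expS_spec x p xG.
  by apply: (addIr (phi x)); rewrite add0r -mulrSr -expE Gp.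
Qed.

Section Exponents.
Variables p m : nat.
Hypothesis p_gt1 : (1 < p)%N.

Lemma D1_exponent (v : D1 p m) : (v *+ p = 0)%R.
Proof. by apply/rowP => j; rewrite mulmxnE !mxE -mulr_natr pchar_Zp ?mulr0. Qed.

Lemma D2_not_exponent : exists w : D2 p m, (w *+ p != 0)%R.
Proof.
have p2_gt1 : (1 < p ^ 2)%N by rewrite (ltn_exp2l 0).
exists (0, 1)%R; rewrite pairMnE; apply/negP => /eqP/(congr1 (val \o snd)).
rewrite /= val_Zp_nat // modn_small ?(ltn_exp2l 1) //.
by move=> p_eq0; move: p_gt1; rewrite p_eq0.
Qed.

Lemma iso_to_D1_D2 (G : cayley_input) : iso_to (D1 p m) G -> ~ iso_to (D2 p m) G.
Proof.
move=> isoD1 isoD2; have [w /eqP[]] := D2_not_exponent.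
by move: w; apply/(iso_to_exponentP p isoD2)/(iso_to_exponentP p isoD1); apply: D1_exponent.
Qed.
End Exponents.

Section Adversary.
Variables (K : finType) (S : {set K}) (mul1 mul2 : nat -> nat -> nat).

Definition perm_carrier (s : {perm K}) : seq nat := [seq pickle (s k) | k <- enum K].

Definition code_in (x : nat) : Prop := exists2 k, k \in S & x = pickle k.

Hypothesis mul_agree :
  {in S &, forall k k', mul1 (pickle k) (pickle k') = mul2 (pickle k) (pickle k')}.
Hypothesis mul_closed : {in S &, forall k k', code_in (mul1 (pickle k) (pickle k'))}.

Local Notation input mul s := (CayleyInput (perm_carrier s) mul).

Lemma perm_carrier_nth (k0 : K) (s : {perm K}) (k : nat) :
  nth 0%N (perm_carrier s) (k %% size (perm_carrier s))
  = pickle (s (nth k0 (enum K) (k %% #|K|))).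
Proof.
have K_gt0 : (0 < #|K|)%N by apply/card_gt0P; exists k0.
by rewrite size_map -cardE (nth_map k0) // -cardE ltn_pmod.
Qed.

Lemma exists_perm_into (s : {perm K}) (F : {set K}) (i : K) :
  {in F, forall x, s x \in S} -> (#|F| < #|S|)%N ->
  exists2 s1 : {perm K}, {in F, s1 =1 s} & s1 i \in S.
Proof.
move=> sFS ltFS; have [iF | iNF] := boolP (i \in F); first by exists s => //; apply: sFS.
have [l] : exists l, l \in S :\: s @: F.
  apply/set0Pn; rewrite -card_gt0 cardsD subn_gt0.
  by rewrite (leq_ltn_trans (subset_leq_card (subsetIr S _))) // (leq_ltn_trans (leq_imset_card _ _)).
rewrite inE => /andP [lNsF lS].
set j := (s^-1)%g l.
have jNF : j \notin F by apply: contra lNsF => jF; apply/imsetP; exists j; rewrite /j ?permKV.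
exists (tperm i j * s)%g; last by rewrite permM tpermL permKV.
move=> x xF; rewrite permM tpermD //.
  by apply: contraNneq iNF => ->.
by apply: contraNneq jNF => ->.
Qed.

Lemma succ_cost_or_eq (r1 r2 : bool * nat) (B : nat) :
  (B <= r1.2)%N \/ r1 = r2 -> (B.+1 <= r1.2.+1)%N \/ (r1.1, r1.2.+1) = (r2.1, r2.2.+1).
Proof. by case=> [le_B | ->]; [left | right]. Qed.

(* [F] holds the positions of the carrier already revealed: the adversary only
   commits to the permutation on [F], and maps [F] into [S]. *)
Lemma run_adversary (A : algo) (B : nat) (hist : seq nat) (s : {perm K}) (F : {set K}) :
  {in hist, forall x, code_in x} -> {in F, forall x, s x \in S} -> (#|F| + B <= #|S|)%N ->
  exists2 s' : {perm K}, {in F, s' =1 s} &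
    (B <= (run A (input mul1 s') hist).2)%N \/
    run A (input mul1 s') hist = run A (input mul2 s') hist.
Proof.
elim: A B hist s F => [b | k c IH | x y c IH] B hist s F hist_S sFS leFS.
- by exists s => //; right.
- case: B leFS => [|B] leFS; first by exists s => //; left.
  have [k0 _] : exists k0, k0 \in S by apply/set0Pn; rewrite -card_gt0; lia.
  set i := nth k0 (enum K) (k %% #|K|).
  have [s1 s1F s1i] := exists_perm_into i sFS ltac:(lia).
  have hist'_S : {in pickle (s1 i) :: hist, forall z, code_in z}.
    by move=> z; rewrite inE => /predU1P [->|]; [exists (s1 i) | apply: hist_S].
  have s1FS : {in i |: F, forall z, s1 z \in S}.
    by move=> z /setU1P [->|zF] //; rewrite s1F // sFS.
  have leF' : (#|i |: F| + B <= #|S|)%N by rewrite cardsU1; case: (i \in F) => /=; lia.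
  have [s' s'F run_s'] := IH (pickle (s1 i)) B _ s1 _ hist'_S s1FS leF'.
  exists s' => [z zF|]; first by rewrite s'F ?inE ?zF ?orbT // s1F.
  by rewrite /= !(perm_carrier_nth k0) -/i s'F ?setU11 //; apply: succ_cost_or_eq.
- case: B leFS => [|B] leFS; first by exists s => //; left.
  case: (boolP ((x \in hist) && (y \in hist))) => [/andP [x_hist y_hist] | Nxy].
  + have [kx kxS ex] := hist_S x x_hist; have [ky kyS ey] := hist_S y y_hist.
    have hist'_S : {in mul1 x y :: hist, forall z, code_in z}.
      move=> z; rewrite inE => /predU1P [->|]; last exact: hist_S.
      by rewrite ex ey; apply: mul_closed.
    have [s' s'F run_s'] := IH (mul1 x y) B _ s F hist'_S sFS ltac:(lia).
    have mul_xy : mul2 x y = mul1 x y by rewrite ex ey mul_agree.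
    by exists s' => //; rewrite /= x_hist y_hist mul_xy; apply: succ_cost_or_eq.
  + have [s' s'F run_s'] := IH 0%N B hist s F hist_S sFS ltac:(lia).
    by exists s' => //; rewrite /= (negbTE Nxy); apply: succ_cost_or_eq.
Qed.

Lemma adversary (A : algo) :
  exists s : {perm K},
    (#|S| <= cost A (input mul1 s))%N \/ answer A (input mul1 s) = answer A (input mul2 s).
Proof.
have nil_S : {in [::], forall x, code_in x} by [].
have set0_S : {in set0, forall k, (1%g : {perm K}) k \in S} by move=> k; rewrite inE.
have le_S : (#|@set0 K| + #|S| <= #|S|)%N by rewrite cards0.
have [s _ [le_cost | eq_run]] := run_adversary A nil_S set0_S le_S.
- by exists s; left.
- by exists s; right; rewrite /answer eq_run.
Qed.
End Adversary.

Definition transport_table (K : countType) (V : zmodType) (d : K -> V) (g : V -> K)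
    (x y : nat) : nat :=
  if (unpickle x, unpickle y) is (Some a, Some b) then pickle (g (d a + d b)%R) else 0.

Lemma transport_tableE (K : countType) (V : zmodType) (d : K -> V) (g : V -> K) (a b : K) :
  transport_table d g (pickle a) (pickle b) = pickle (g (d a + d b)%R).
Proof. by rewrite /transport_table !pickleK. Qed.

Lemma iso_to_transport (K : finType) (V : zmodType) (d : K -> V) (g : V -> K) (s : {perm K}) :
  cancel d g -> cancel g d -> iso_to V (CayleyInput (perm_carrier s) (transport_table d g)).
Proof.
move=> dK gK.
have mem_carrier (k : K) : pickle k \in perm_carrier s.
  by apply/mapP; exists ((s^-1)%g k); rewrite ?mem_enum ?permKV.
split; first by rewrite map_inj_uniq ?enum_uniq // => a b /(pcan_inj pickleK)/perm_inj.
split; first by move=> _ _ /mapP [a _ ->] /mapP [b _ ->]; rewrite /= transport_tableE.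
exists (fun x => if unpickle x is Some a then d a else 0%R); split.
  by move=> _ _ /mapP [a _ ->] /mapP [b _ ->]; rewrite /= !pickleK => /(can_inj dK) ->.
split; first by move=> v; exists (pickle (g v)); rewrite ?pickleK ?gK.
by move=> _ _ /mapP [a _ ->] /mapP [b _ ->]; rewrite /= transport_tableE !pickleK gK.
Qed.

Section TwoDigits.
Variable p : nat.
Hypothesis p_gt1 : (1 < p)%N.

Lemma Zp_ltn (u : 'Z_p) : (u < p)%N.
Proof. by rewrite -[X in (_ < X)%N](Zp_cast p_gt1). Qed.

Definition Zp2_of_digits (a b : 'Z_p) : 'Z_(p ^ 2) := (a * p + b)%:R%R.

Lemma Zp2_of_digits_inj a b a' b' :
  Zp2_of_digits a b = Zp2_of_digits a' b' -> a = a' /\ b = b'.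
Proof.
have p_gt0 : (0 < p)%N by apply: ltnW.
have p2_gt1 : (1 < p ^ 2)%N by rewrite (ltn_exp2l 0).
have digits_lt (u v : 'Z_p) : (u * p + v < p ^ 2)%N.
  by have := Zp_ltn u; have := Zp_ltn v; nia.
move/(congr1 val); rewrite /= !val_Zp_nat // !modn_small // => eq_num.
have := congr1 (modn^~ p) eq_num; have := congr1 (divn^~ p) eq_num.
rewrite /= !modnMDl !divnMDl // !modn_small ?divn_small ?Zp_ltn // !addn0.
by move=> /val_inj -> /val_inj ->.
Qed.

Lemma Zp2_of_digitsD a a' :
  (Zp2_of_digits a 0 + Zp2_of_digits a' 0 = Zp2_of_digits (a + a') 0)%R.
Proof.
rewrite /Zp2_of_digits /= !addn0 -natrD -mulnDl.
have -> : ((a + a') %% (Zp_trunc p).+2 = (a + a') %% p)%N by congr (_ %% _); apply: Zp_cast.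
by rewrite muln_modl -mulnn Zp_nat_mod // mulnn (ltn_exp2l 0).
Qed.

End TwoDigits.

Section Encodings.
Variables p n : nat.
Hypothesis p_gt1 : (1 < p)%N.
Local Notation code := ('rV['Z_p]_2 * 'rV['Z_p]_n)%type.
Local Open Scope ring_scope.

Definition encD1 (k : code) : 'rV['Z_p]_(2 + n) := row_mx k.1 k.2.
Definition decD1 (v : 'rV['Z_p]_(2 + n)) : code := (lsubmx v, rsubmx v).

Lemma encD1K : cancel encD1 decD1.
Proof. by case=> u r; rewrite /decD1 row_mxKl row_mxKr. Qed.

Lemma decD1K : cancel decD1 encD1.
Proof. exact: hsubmxK. Qed.

Lemma encD1D : {morph encD1 : k k' / k + k'}.
Proof. by case=> u r [u' r']; rewrite /encD1 add_row_mx. Qed.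

Definition encD2 (k : code) : 'rV['Z_p]_n * 'Z_(p ^ 2) :=
  (k.2, Zp2_of_digits (k.1 ord0 ord0) (k.1 ord0 ord_max)).

Lemma encD2_bij : bijective encD2.
Proof.
apply: inj_card_bij; last first.
  by rewrite !card_prod !card_mx !card_ord !Zp_cast ?(ltn_exp2l 0) // !mul1n mulnC.
move=> [u r] [u' r'] [-> /(Zp2_of_digits_inj p_gt1) [eq0 eq1]]; congr pair.
apply/rowP => j; have [->|->] // : j = ord0 \/ j = ord_max.
by case: j => -[|[|//]] lt_j2; [left | right]; apply: val_inj.
Qed.

Definition common_subgroup : {set code} := [set k : code | k.1 ord0 ord_max == 0].

Lemma common_subgroupD :
  {in common_subgroup &, forall k k', k + k' \in common_subgroup}.
Proof. by move=> k k'; rewrite !inE mxE => /eqP -> /eqP ->; rewrite addr0. Qed.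

(* On [common_subgroup] the low digit vanishes, so the addition of the high
   digits never carries. *)
Lemma encD2D : {in common_subgroup &, {morph encD2 : k k' / k + k'}}.
Proof.
move=> [u r] [u' r']; rewrite !inE /= => /eqP u1 /eqP u'1.
by rewrite /encD2 /= !mxE u1 u'1 addr0 -(Zp2_of_digitsD p_gt1).
Qed.

Lemma card_common_subgroup : (p ^ n <= #|common_subgroup|)%N.
Proof.
have <- : #|[set (0 : 'rV['Z_p]_2, r) | r : 'rV['Z_p]_n]| = (p ^ n)%N.
  by rewrite card_imset => [|r r' [] //]; rewrite card_mx card_ord Zp_cast ?mul1n.
by apply/subset_leq_card/subsetP => _ /imsetP [r _ ->]; rewrite inE mxE.
Qed.

Lemma transport_encD1 (k k' : code) :
  transport_table encD1 decD1 (pickle k) (pickle k') = pickle (k + k').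
Proof. by rewrite transport_tableE -encD1D encD1K. Qed.

Lemma transport_encD2 (decD2 : 'rV['Z_p]_n * 'Z_(p ^ 2) -> code) :
  cancel encD2 decD2 ->
  {in common_subgroup &, forall k k' : code,
    transport_table encD2 decD2 (pickle k) (pickle k') = pickle (k + k')}.
Proof. by move=> encD2K k k' kS k'S; rewrite transport_tableE -encD2D ?encD2K. Qed.

End Encodings.

Theorem mainTheorem16 :
  exists c : nat, (0 < c)%N /\
  forall (p m : nat), prime p -> (3 <= m)%N ->
  forall A : algo,
    (forall G, in_calG p m G -> (answer A G = true <-> iso_to (D1 p m) G)) ->
    exists G, in_calG p m G /\ (p ^ (m - 2) <= c * cost A G)%N.
Proof.
exists 1%N; split=> // p m p_prime m_ge3.
have [n ->] : exists n, m = n.+3 by exists (m - 3)%N; lia.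
move=> A A_correct.
have p_gt1 := prime_gt1 p_prime.
have [decD2 encD2K decD2K] := encD2_bij n.+1 p_gt1.
set S := common_subgroup p n.+1.
set mul1 := transport_table (@encD1 p n.+1) (@decD1 p n.+1).
set mul2 := transport_table (@encD2 p n.+1) decD2.
have mul_agree : {in S &, forall k k', mul1 (pickle k) (pickle k') = mul2 (pickle k) (pickle k')}.
  by move=> k k' kS k'S; rewrite /mul1 /mul2 transport_encD1 transport_encD2.
have mul_closed : {in S &, forall k k', code_in S (mul1 (pickle k) (pickle k'))}.
  by move=> k k' kS k'S; exists (k + k')%R; [apply: common_subgroupD | apply: transport_encD1].
have [s cost_or_same] := adversary mul_agree mul_closed A.
have iso1 : iso_to (D1 p n.+3) (CayleyInput (perm_carrier s) mul1).
  exact: iso_to_transport s (@encD1K p n.+1) (@decD1K p n.+1).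
have iso2 : iso_to (D2 p n.+3) (CayleyInput (perm_carrier s) mul2).
  exact: iso_to_transport s encD2K decD2K.
case: cost_or_same => [cost_ge | same_answer].
  exists (CayleyInput (perm_carrier s) mul1); split; first by left.
  by rewrite mul1n (leq_trans (card_common_subgroup n.+1 p_gt1)).
case: (iso_to_D1_D2 p_gt1 _ iso2); apply: (A_correct _ (or_intror iso2)).1.
by rewrite -same_answer; apply/(A_correct _ (or_introl iso1)).2.
Qed.
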